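(* For every $n\geq1$ and every $i\in[n]$, the triple $(G_i([n]),\phi_i([n]),(g_{i,1},\dots,g_{i,n}))$ is an $n$-expansion group.
   Context: $V_{[n]}=\mathbb{F}_2^n$ with basis $e_1,\dots,e_n$. An $n$-expansion group is a triple $(G,\phi,(g_1,\dots,g_n))$: $G$ a group, $\phi:G\to V_{[n]}$ a homomorphism with $\phi(g_j)=e_j$, $g_j^2=1$ for all $j$, $\ker\phi$ an elementary abelian $2$-group, and $[G,G]=\ker\phi$. Let $U_i$ be the $\mathbb{F}_2$-vector space with basis $\{e_A: A\subseteq[n], i\in A\}$, on which $\mathbb{F}_2^{[n]\setminus\{i\}}$ (basis $e_j$, $j\neq i$) acts linearly by $e_j\cdot e_A=e_A+e_{A\cup\{j\}}$ if $j\notin A$ and $e_j\cdot e_A=e_A$ if $j\in A$. $G_i([n])=U_i\rtimes\mathbb{F}_2^{[n]\setminus\{i\}}$, $g_{i,j}=(0,e_j)$ for $j\neq i$, $g_{i,i}=(e_{\{i\}},0)$, and $\phi_i([n]):G_i([n])\to V_{[n]}$ is the natural projection $(u,w)\mapsto w+c(u)e_i$, where $c(u)$ is the coefficient of $e_{\{i\}}$ in $u$; it sends $g_{i,j}$ to $e_j$. *)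

From HB Require Import structures.
From mathcomp Require Import all_boot all_order all_algebra.
Set Implicit Arguments. Unset Strict Implicit. Unset Printing Implicit Defensive.
Import GRing.Theory.
Local Open Scope ring_scope.

Section Expansion.
Variables (G : Type) (mul : G -> G -> G) (one : G) (inv : G -> G).

Definition is_group : Prop :=
  [/\ forall x y z, mul x (mul y z) = mul (mul x y) z,
      forall x, mul one x = x /\ mul x one = x
    & forall x, mul (inv x) x = one /\ mul x (inv x) = one].

Inductive gen_subgroup (S : G -> Prop) : G -> Prop :=
  | gen_one : gen_subgroup S one
  | gen_in x : S x -> gen_subgroup S x
  | gen_inv x : gen_subgroup S x -> gen_subgroup S (inv x)
  | gen_mul x y : gen_subgroup S x -> gen_subgroup S y -> gen_subgroup S (mul x y).

Definition commg (x y : G) : G := mul (mul (inv x) (inv y)) (mul x y).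

Definition derived (z : G) : Prop :=
  gen_subgroup (fun c => exists x y, c = commg x y) z.

(* V_[n] = F_2^n, basis e_j = delta_mx 0 j *)
Definition is_expansion_group (n : nat) (phi : G -> 'rV['F_2]_n)
    (g : 'I_n -> G) : Prop :=
  is_group /\
  [/\
      forall x y, phi (mul x y) = phi x + phi y,
      forall j, phi (g j) = delta_mx 0 j,
      forall j, mul (g j) (g j) = one,
      forall x y, phi x = 0 -> phi y = 0 -> mul x y = mul y x /\ mul x x = one
    &
      forall x, derived x <-> phi x = 0].

End Expansion.

Section Gi.
Variables (n : nat) (i : 'I_n).

(* index set of the basis of U_i : subsets A of [n] with i \in A *)
Local Notation setsI := {A : {set 'I_n} | i \in A}.
Local Notation idxW := {j : 'I_n | j != i}.

Local Notation UU := {ffun setsI -> 'F_2}.          (* U_i, coordinates on e_A *)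
Local Notation WW := {ffun idxW -> 'F_2}.
Local Notation GG := (UU * WW)%type.                (* G_i([n]) = U_i x| W *)

(* B \ {j}, as an element of setsI (it always contains i when j != i) *)
Definition remj (B : setsI) (j : idxW) : setsI := insubd B (val B :\ val j).

(* action of the basis vector e_j (j != i) on U_i, extended linearly from
   e_j . e_A = e_A + e_{A u {j}} (j \notin A),  e_j . e_A = e_A (j \in A);
   in coordinates: (e_j . u)(B) = u(B) + [j \in B] u(B \ {j}). *)
Definition actj (j : idxW) (u : UU) : UU :=
  [ffun B => u B + (if val j \in val B then u (remj B j) else 0)].

Definition actW (w : WW) (u : UU) : UU :=
  foldr (fun j v => if w j != 0 then actj j v else v) u (enum {: idxW}).

Definition Gmul (x y : GG) : GG := (x.1 + actW x.2 y.1, x.2 + y.2).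
Definition Gone : GG := (0, 0).
Definition Ginv (x : GG) : GG := (- actW (- x.2) x.1, - x.2).

Definition singI : setsI := exist (fun A : {set 'I_n} => i \in A) [set i] (set11 i).

Definition Gphi (x : GG) : 'rV['F_2]_n :=
  \sum_(j : idxW) x.2 j *: delta_mx 0 (val j) + x.1 singI *: delta_mx 0 i.

Definition e_sing : UU := [ffun B => ((val B == [set i]) : nat)%:R].

Definition Ggen (j : 'I_n) : GG :=
  match @insub _ (fun k => k != i) idxW j with
  | Some j' => (0, [ffun k => ((k == j') : nat)%:R])
  | None => (e_sing, 0)
  end.

End Gi.

From Pilot Require Import Defs.
From mathcomp Require Import all_boot all_order all_algebra.
From mathcomp Require Import ring.

Set Implicit Arguments.
Unset Strict Implicit.
Unset Printing Implicit Defensive.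

Import GRing.Theory.
Local Open Scope ring_scope.

(* G_i([n]) is U_i semidirect W, where W = F_2^([n]\{i}) acts through the
   pairwise commuting additive involutions e_j.  phi_i([n]) is a homomorphism
   onto an abelian group, so [G, G] lies in its kernel.  The kernel consists of
   the (u, 0) with c(u) = 0; it sits inside the abelian group U_i, of
   exponent 2.  Conversely, for j in B \ {i} the generator e_j moves
   e_(B\{j}) to e_(B\{j}) + e_B, so e_B is the commutator of g_(i,j) and
   e_(B\{j}); these e_B (B <> {i}) span the kernel. *)

Lemma F2_cases (x : 'F_2) : x = 0 \/ x = 1.
Proof. by case: x => [[|[|k]] //] lt_x2; [left | right]; apply: val_inj. Qed.

Lemma F2_addrr (x : 'F_2) : x + x = 0.
Proof. exact/addrr_pchar2/pchar_Fp. Qed.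

Section F2Functions.
Variable T : finType.
Implicit Types (u : {ffun T -> 'F_2}) (a : T).

Lemma ffun_addrr_F2 u : u + u = 0.
Proof. by apply/ffunP => a; rewrite !ffunE F2_addrr. Qed.

Lemma ffun_oppr_F2 u : - u = u.
Proof. by apply/eqP; rewrite -subr_eq0 -opprD ffun_addrr_F2 oppr0. Qed.

Definition delta_ffun a : {ffun T -> 'F_2} := [ffun x => (x == a)%:R].

Lemma ffun_F2_support_sum u : u = \sum_(a | u a != 0) delta_ffun a.
Proof.
apply/ffunP => b; rewrite sum_ffunE.
have [ub0 | ub1] := F2_cases (u b).
  rewrite ub0 big1 // => a ua; rewrite ffunE; case: eqP => // ba.
  by rewrite -ba ub0 eqxx in ua.
rewrite (bigD1 b) ?ub1 ?oner_eq0 //= ffunE eqxx big1 ?addr0 // => a /andP [_ nab].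
by rewrite ffunE eq_sym (negbTE nab).
Qed.

End F2Functions.

Section DerivedSubgroup.
Variables (G : Type) (mul : G -> G -> G) (one : G) (inv : G -> G).
Variables (V : zmodType) (phi : G -> V).
Hypotheses (G_group : is_group mul one inv)
  (phiM : forall x y, phi (mul x y) = phi x + phi y).

Lemma hom_one : phi one = 0.
Proof.
case: G_group => _ mul1 _; apply: (@addrI _ (phi one)).
by rewrite -phiM (proj1 (mul1 one)) addr0.
Qed.

Lemma hom_inv x : phi (inv x) = - phi x.
Proof.
case: G_group => _ _ mulV; apply/eqP; rewrite -addr_eq0 -phiM.
by rewrite (proj1 (mulV x)) hom_one.
Qed.

Lemma derived_sub_ker x : derived mul one inv x -> phi x = 0.
Proof.
elim=> {x} [| _ [x [y ->]] | x _ | x y _ phix _ phiy].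
- exact: hom_one.
- by rewrite /commg !phiM !hom_inv addrACA !addNr addr0.
- by rewrite hom_inv => ->; rewrite oppr0.
- by rewrite phiM phix phiy addr0.
Qed.

End DerivedSubgroup.

Section CommutingInvolutions.
Variables (I : finType) (V : zmodType) (f : I -> V -> V).
Hypotheses (fD : forall j, {morph f j : u v / u + v})
  (fK : forall j, involutive (f j))
  (f_comm : forall j k u, f j (f k u) = f k (f j u)).
Implicit Types (w : {ffun I -> 'F_2}) (s : seq I) (u v : V).

Definition act_seq w s u : V :=
  foldr (fun j v => if w j != 0 then f j v else v) u s.

Lemma act_seqD w s : {morph act_seq w s : u v / u + v}.
Proof. by move=> u v; elim: s => //= j s IH; case: ifP; rewrite IH ?fD. Qed.

Lemma act_seq0 w s : act_seq w s 0 = 0.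
Proof. by apply: (@addrI _ (act_seq w s 0)); rewrite -act_seqD !addr0. Qed.

Lemma act_seq_id s u : act_seq 0 s u = u.
Proof. by elim: s => //= j s IH; rewrite ffunE eqxx. Qed.

Lemma act_seq_comm w s k u : f k (act_seq w s u) = act_seq w s (f k u).
Proof. by elim: s => //= j s IH; case: ifP; rewrite -IH // f_comm. Qed.

Lemma act_seq_addw w w' s u :
  act_seq (w + w') s u = act_seq w s (act_seq w' s u).
Proof.
elim: s => //= j s IH; rewrite ffunE IH.
have [-> | ->] := F2_cases (w j); have [-> | ->] := F2_cases (w' j);
  rewrite ?addr0 ?add0r ?F2_addrr ?eqxx ?oner_eq0 //= -act_seq_comm //.
by rewrite fK.
Qed.

Lemma act_seq_delta (j : I) s u : uniq s ->
  act_seq (delta_ffun j) s u = if j \in s then f j u else u.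
Proof.
elim: s => //= k s IH /andP [ks us]; rewrite ffunE in_cons IH //.
have [<- | _] := eqVneq k j; last by rewrite eqxx.
by rewrite oner_eq0 /= (negbTE ks).
Qed.

Lemma act_seq_invariant (T : Type) (c : V -> T) w s u :
  (forall j v, c (f j v) = c v) -> c (act_seq w s u) = c u.
Proof. by move=> cf; elim: s => //= j s IH; case: ifP; rewrite ?cf. Qed.

End CommutingInvolutions.

Section ExpansionGroup.
Variables (n : nat) (i : 'I_n).
Local Notation setsI := {A : {set 'I_n} | i \in A}.
Local Notation idxW := {j : 'I_n | j != i}.
Local Notation UU := {ffun setsI -> 'F_2}.
Local Notation WW := {ffun idxW -> 'F_2}.
Local Notation GG := (UU * WW)%type.
Local Notation mul := (@Gmul n i).
Local Notation one := (Gone i).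
Local Notation inv := (@Ginv n i).
Local Notation phi := (@Gphi n i).
Local Notation der := (derived mul one inv).
Implicit Types (u v : UU) (w : WW) (x y : GG) (B : setsI) (j k : idxW).

Lemma val_remj B j : val (remj B j) = val B :\ val j.
Proof. by rewrite /remj val_insubd in_setD1 (valP B) andbT eq_sym (valP j). Qed.

Lemma actjD j : {morph actj j : u v / u + v}.
Proof.
move=> u v; apply/ffunP => B; rewrite !ffunE.
by case: ifP => _; [ring | rewrite !addr0].
Qed.

Lemma actjK j : involutive (actj j).
Proof.
move=> u; apply/ffunP => B; rewrite !ffunE; case: ifP => _; last by rewrite !addr0.
by rewrite val_remj setD11 addr0 -addrA F2_addrr addr0.
Qed.

Lemma actj_comm j k u : actj j (actj k u) = actj k (actj j u).
Proof.
have [-> // | njk] := eqVneq j k.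
have njk' : val j != val k by [].
apply/ffunP => B; rewrite !ffunE !val_remj !in_setD1 (negbTE njk') eq_sym (negbTE njk').
have -> : remj (remj B j) k = remj (remj B k) j.
  by apply: val_inj; rewrite !val_remj setDDl setDDl setUC.
by case: (val j \in val B); case: (val k \in val B) => /=; ring.
Qed.

Lemma actj_sing j u : actj j u (singI i) = u (singI i).
Proof. by rewrite ffunE /= in_set1 (negbTE (valP j)) addr0. Qed.

Lemma actWE w u : actW w u = act_seq (@actj n i) w (enum {: idxW}) u.
Proof. by []. Qed.

Lemma actWD w : {morph actW w : u v / u + v}.
Proof. exact: (act_seqD actjD w (enum {: idxW})). Qed.

Lemma actW0 w : actW w 0 = 0.
Proof. exact: (act_seq0 actjD w (enum {: idxW})). Qed.

Lemma actW_id u : actW 0 u = u.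
Proof. exact: (act_seq_id (@actj n i) (enum {: idxW})). Qed.

Lemma actW_addw w w' u : actW (w + w') u = actW w (actW w' u).
Proof. exact: (act_seq_addw actjK actj_comm w w' (enum {: idxW})). Qed.

Lemma actW_sing w u : actW w u (singI i) = u (singI i).
Proof. exact: (act_seq_invariant (c := fun v : UU => v (singI i))) actj_sing. Qed.

Lemma actW_delta j u : actW (delta_ffun j) u = actj j u.
Proof. by rewrite actWE act_seq_delta ?enum_uniq ?mem_enum. Qed.

Lemma GmulE x y : mul x y = (x.1 + actW x.2 y.1, x.2 + y.2).
Proof. by []. Qed.

Lemma GinvE x : inv x = (actW x.2 x.1, x.2).
Proof. by rewrite /Ginv !ffun_oppr_F2. Qed.

Lemma G_is_group : is_group mul one inv.
Proof.
split=> [[x1 x2] [y1 y2] [z1 z2] | [x1 x2] | [x1 x2]]; rewrite /Gone ?GinvE !GmulE /=.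
- by rewrite actWD actW_addw !addrA.
- by rewrite actW_id actW0 !add0r !addr0.
- by rewrite -!actW_addw !ffun_addrr_F2 actW_id ffun_addrr_F2.
Qed.

Lemma Gmul_ker u v : mul (u, 0) (v, 0) = (u + v, 0).
Proof. by rewrite GmulE actW_id addr0. Qed.

Lemma GphiM x y : phi (mul x y) = phi x + phi y.
Proof.
rewrite /Gphi GmulE /= ffunE actW_sing scalerDl addrACA -big_split /=.
by congr (_ + _); apply: eq_bigr => j _; rewrite ffunE scalerDl.
Qed.

Lemma Gphi_entry x (k : 'I_n) :
  phi x 0 k = \sum_j x.2 j * (k == val j)%:R + x.1 (singI i) * (k == i)%:R.
Proof.
rewrite /Gphi mxE summxE; congr (_ + _); first apply: eq_bigr => j _;
  by rewrite !mxE eqxx.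
Qed.

Lemma Gphi_eq0 x : phi x = 0 <-> x.2 = 0 /\ x.1 (singI i) = 0.
Proof.
split=> [/matrixP phi0 | []]; last first.
  case: x => u w /= -> u_sing; rewrite /Gphi /= u_sing scale0r addr0.
  by rewrite big1 // => j _; rewrite ffunE scale0r.
split.
  apply/ffunP => j; move: (phi0 0 (val j)); rewrite Gphi_entry mxE ffunE.
  rewrite (bigD1 j) //= big1 => [|k nkj]; last first.
    by rewrite val_eqE eq_sym (negbTE nkj) mulr0.
  by rewrite eqxx (negbTE (valP j)) mulr1 mulr0 !addr0.
move: (phi0 0 i); rewrite Gphi_entry mxE eqxx mulr1 big1 ?add0r // => j _.
by rewrite eq_sym (negbTE (valP j)) mulr0.
Qed.

Lemma Gphi_gen (j : 'I_n) : phi (Ggen i j) = delta_mx 0 j.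
Proof.
rewrite /Ggen /Gphi; case: insubP => [k _ <- | /negbNE /eqP ->] /=.
  rewrite ffunE scale0r addr0 (bigD1 k) //= big1 => [|l nlk].
    by rewrite ffunE eqxx scale1r addr0.
  by rewrite ffunE (negbTE nlk) scale0r.
rewrite big1 => [|k _]; last by rewrite ffunE scale0r.
by rewrite add0r ffunE eqxx scale1r.
Qed.

Lemma Ggen_sqr (j : 'I_n) : mul (Ggen i j) (Ggen i j) = one.
Proof.
rewrite /Ggen GmulE; case: insubP => [k _ _ | _] /=.
  by rewrite actW0 addr0 ffun_addrr_F2.
by rewrite actW_id ffun_addrr_F2 addr0.
Qed.

Lemma Gker_abelian x y : phi x = 0 -> phi y = 0 -> mul x y = mul y x /\ mul x x = one.
Proof.
case: x y => [u w] [v w'] /Gphi_eq0 [/= -> _] /Gphi_eq0 [/= -> _].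
by rewrite !Gmul_ker addrC ffun_addrr_F2.
Qed.

Lemma Gcommg_delta B j : val j \in val B ->
  Defs.commg mul inv (0, delta_ffun j) (delta_ffun (remj B j), 0) = (delta_ffun B, 0).
Proof.
move=> jB; rewrite /Defs.commg !GinvE !GmulE /= actW0 actW_id !addr0 !add0r.
rewrite -actW_addw ffun_addrr_F2 actW_id actW_delta; congr pair.
apply/ffunP => C; rewrite !ffunE addrAC F2_addrr add0r.
have [-> | nCB] := eqVneq C B; first by rewrite jB eqxx.
case: ifP => // jC; case: eqP => // /(congr1 val).
rewrite !val_remj => CB; case/eqP: nCB; apply: val_inj.
by rewrite -(setD1K jC) -(setD1K jB) CB.
Qed.

Lemma derived_delta B : B != singI i -> der (delta_ffun B, 0).
Proof.
move=> nBi.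
have [k /andP [kB ki]] : exists k : 'I_n, (k \in val B) && (k != i).
  apply/existsP; apply: contraR nBi => /existsPn noj.
  apply/eqP/val_inj/setP => k /=; rewrite in_set1.
  have [-> | nki] := eqVneq k i; first exact: (valP B).
  by move: (noj k); rewrite nki andbT => /negbTE.
rewrite -(Gcommg_delta (j := exist _ k ki)) //.
by apply: gen_in; do 2 eexists.
Qed.

Lemma Gker_derived x : phi x = 0 -> der x.
Proof.
case: x => u w /Gphi_eq0 [/= -> u_sing].
rewrite (ffun_F2_support_sum u); apply: (big_ind (fun v => der (v, 0))).
- exact: gen_one.
- by move=> v v' dv dv'; rewrite -Gmul_ker; apply: gen_mul.
- by move=> B uB; apply: derived_delta; apply: contraNneq uB => ->; rewrite u_sing.
Qed.

End ExpansionGroup.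

Theorem proposition3p11 (n : nat) (hn : (1 <= n)%N) (i : 'I_n) :
  is_expansion_group (@Gmul n i) (Gone i) (@Ginv n i) (@Gphi n i) (@Ggen n i).
Proof.
split; first exact: G_is_group.
split=> [|||| x].
- exact: GphiM.
- exact: Gphi_gen.
- exact: Ggen_sqr.
- exact: Gker_abelian.
- split; last exact: Gker_derived.
  exact/derived_sub_ker/GphiM/G_is_group.
Qed.
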